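(* Let $L>0$, $D>0$, $\alpha\in(0,1]$, $\tau_{\rm acc}>0$, $\tau_{\rm m}>0$, $h_{\rm m}>0$, $\bar h_{\rm acc}>0$, $k>0$, and let $\tau_{\rm mix},\bar h_{\rm mix},\bar\rho,\bar v,c_1,\dots,c_5$ be as in the context. Consider the closed-loop system consisting of $$\tilde\rho_t+\bar v\tilde\rho_x+\bar\rho\tilde v_x=0,\qquad \tilde v_t-c_4\tilde v_x=-c_1\tilde\rho-c_2\tilde v-c_3\tilde h_{\rm acc}\quad (x\in[0,D],\,t\ge0),$$ $$\tilde\rho(0,t)+c_5\tilde v(0,t)=0,\qquad \tilde v_t(D,t)=-c_1\tilde\rho(D,t)-c_2\tilde v(D,t)-c_3\tilde h_{\rm acc}(D,t),$$ together with the control law $\tilde h_{\rm acc}(x,t)=\frac{1}{c_3}\left(-c_1\tilde\rho(x,t)+(k-c_2)\tilde v(x,t)\right)$. For all initial conditions $(\tilde\rho(\cdot,0),\tilde v(\cdot,0))\in C^1[0,D]\times C^1[0,D]$ which satisfy first-order compatibility with the boundary conditions, there exists a positive constant $\mu$ such that for all $t\ge0$ $$\|\tilde\rho(t)\|_{C^1}+\|\tilde v(t)\|_{C^1}\le\mu\left(\|\tilde\rho(0)\|_{C^1}+\|\tilde v(0)\|_{C^1}\right)e^{-\frac k2 t}.$$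
   Context: Definitions: $\tau_{\rm mix}=\left(\frac{\alpha}{\tau_{\rm acc}}+\frac{1-\alpha}{\tau_{\rm m}}\right)^{-1}$; $\bar h_{\rm mix}=\frac{\alpha+(1-\alpha)\frac{\tau_{\rm acc}}{\tau_{\rm m}}}{\alpha+(1-\alpha)\frac{\tau_{\rm acc}}{\tau_{\rm m}}\frac{\bar h_{\rm acc}}{h_{\rm m}}}\bar h_{\rm acc}$. Given a constant inflow $q_{\rm in}>0$ with $q_{\rm in}\bar h_{\rm mix}<1$, $\bar v=\frac{L}{\frac1{q_{\rm in}}-\bar h_{\rm mix}}$, $\bar\rho=q_{\rm in}/\bar v$ (so $\frac1{\bar\rho}-L=\bar h_{\rm mix}\bar v$, and $\bar\rho<1/L$). Constants: $c_1=\frac{1}{\bar\rho^2\tau_{\rm mix}\bar h_{\rm mix}}$, $c_2=\frac1{\tau_{\rm mix}}$, $c_3=\frac{\alpha}{\tau_{\rm acc}\bar h_{\rm acc}^2}\left(\frac1{\bar\rho}-L\right)$, $c_4=\frac{L}{\bar h_{\rm mix}}$, $c_5=\frac{\bar\rho}{\bar v}$. Norms: $\|u\|_{C^1}=\max_{[0,D]}|u|+\max_{[0,D]}|u'|$, and $\tilde\rho(t)=\tilde\rho(\cdot,t)$. First-order compatibility of the closed-loop system means: $\tilde\rho(0,0)+c_5\tilde v(0,0)=0$, the time-differentiated boundary condition at $x=0$ holds at $t=0$ when time derivatives are replaced via the closed-loop PDEs (i.e. $-\bar v\tilde\rho_x(0,0)-\bar\rho\tilde v_x(0,0)+c_5(c_4\tilde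 v_x(0,0)-k\tilde v(0,0))=0$), and the dynamic boundary condition at $x=D$ is consistent with the PDE at $t=0$ (i.e. $\tilde v_x(D,0)=0$). Here $\tilde\rho,\tilde v,\tilde h_{\rm acc}$ are deviations of traffic density, speed, and ACC time-gap from a uniform congested equilibrium $(\bar\rho,\bar v,\bar h_{\rm acc})$. *)

From Stdlib Require Import Reals Lra.
From Coquelicot Require Import Coquelicot.
Open Scope R_scope.

Definition tau_mix (alpha tau_acc tau_m : R) : R :=
  / (alpha / tau_acc + (1 - alpha) / tau_m).

Definition h_mix (alpha tau_acc tau_m h_m hbar_acc : R) : R :=
  (alpha + (1 - alpha) * (tau_acc / tau_m)) /
  (alpha + (1 - alpha) * (tau_acc / tau_m) * (hbar_acc / h_m)) * hbar_acc.

Definition vbar (L q_in hmix : R) : R := L / (/ q_in - hmix).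
Definition rhobar (L q_in hmix : R) : R := q_in / vbar L q_in hmix.

Definition cst1 (rb tmix hmix : R) : R := / (rb ^ 2 * tmix * hmix).
Definition cst2 (tmix : R) : R := / tmix.
Definition cst3 (alpha tau_acc hbar_acc rb L : R) : R :=
  alpha / (tau_acc * hbar_acc ^ 2) * (/ rb - L).
Definition cst4 (L hmix : R) : R := L / hmix.
Definition cst5 (rb vb : R) : R := rb / vb.

Definition derive_within (S : R -> Prop) (g : R -> R) (y d : R) : Prop :=
  forall eps, 0 < eps -> exists delta, 0 < delta /\
    forall h, h <> 0 -> Rabs h < delta -> S (y + h) ->
      Rabs ((g (y + h) - g y) / h - d) < eps.

Definition in_space (D x : R) : Prop := 0 <= x <= D.
Definition in_time (t : R) : Prop := 0 <= t.
Definition in_Omega (D x t : R) : Prop := in_space D x /\ in_time t.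

Definition cont_Omega (D : R) (f : R -> R -> R) : Prop :=
  forall x t, in_Omega D x t ->
  forall eps, 0 < eps -> exists delta, 0 < delta /\
    forall x' t', in_Omega D x' t' -> Rabs (x' - x) < delta -> Rabs (t' - t) < delta ->
      Rabs (f x' t' - f x t) < eps.

Definition C1_Omega (D : R) (u ux ut : R -> R -> R) : Prop :=
  cont_Omega D u /\ cont_Omega D ux /\ cont_Omega D ut /\
  forall x t, in_Omega D x t ->
    derive_within (in_space D) (fun y => u y t) x (ux x t) /\
    derive_within in_time (fun s => u x s) t (ut x t).

(* sup-norm on [0,D]: max_{[0,D]} |f| (a max, since f is continuous) *)
Definition sup_norm (D : R) (f : R -> R) : R :=
  real (Lub_Rbar (fun r => exists x, 0 <= x <= D /\ r = Rabs (f x))).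

Definition C1_norm (D : R) (u du : R -> R) : R := sup_norm D u + sup_norm D du.

(* Under the control law the speed equation becomes v_t - c4 v_x = -k v, also
   at the boundary x = D, so e^{kt} v is conserved along the characteristics
   x + c4 t = const: v(x,t) = e^{-kt} v(min(x + c4 t, D), 0).  After time D/c4
   the speed is therefore constant in space, the density equation is pure
   transport with speed vbar, and after T = D/c4 + D/vbar the density is fixed
   by the boundary condition at x = 0: rho(x,t) = -c5 v(D,0) e^{-k(t - x/vbar)}.
   Hence the C^1 norm decays like e^{-kt} after T; on [0,T] it is bounded by
   compactness, and both bounds are absorbed into one constant mu once the
   initial norm is positive, zero data giving the zero solution. *)

From Stdlib Require Import Reals Lra Psatz Classical ClassicalEpsilon.
From Coquelicot Require Import Coquelicot.
Open Scope R_scope.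

Lemma exp_le x y : x <= y -> exp x <= exp y.
Proof. intros [H|H]; [left; apply exp_increasing; exact H | subst; lra]. Qed.

Definition continuous_within (a b : R) (U : R -> R) (y : R) : Prop :=
  forall eps, 0 < eps -> exists delta, 0 < delta /\
    forall s, a <= s <= b -> Rabs (s - y) < delta -> Rabs (U s - U y) < eps.

Definition clamp (a b s : R) : R := Rmax a (Rmin s b).

Lemma clamp_between a b s : a <= b -> a <= clamp a b s <= b.
Proof. intros Hab; unfold clamp, Rmax, Rmin; repeat destruct Rle_dec; lra. Qed.

Lemma clamp_id a b s : a <= s <= b -> clamp a b s = s.
Proof. intros Hs; unfold clamp, Rmax, Rmin; repeat destruct Rle_dec; lra. Qed.

Lemma clamp_dist a b s y : a <= y <= b -> Rabs (clamp a b s - y) <= Rabs (s - y).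
Proof. intros Hy; unfold clamp, Rmax, Rmin; repeat destruct Rle_dec; split_Rabs; lra. Qed.

Lemma continuity_pt_clamp a b U y : a <= y <= b -> continuous_within a b U y ->
  continuity_pt (fun s => U (clamp a b s)) y.
Proof.
  intros Hy HU eps Heps.
  destruct (HU eps Heps) as [delta [Hdelta Hclose]].
  exists delta; split; [exact Hdelta |].
  intros s [_ Hs]; simpl in *; unfold Rdist in *.
  rewrite (clamp_id a b y Hy).
  apply Hclose; [apply clamp_between; lra |].
  eapply Rle_lt_trans; [apply clamp_dist |]; assumption.
Qed.

(* The clamp extension turns one-sided continuity at the endpoints into the
   two-sided continuity required by the mean value theorem. *)
Lemma ode_exp_invariant U k a b : a <= b ->
  (forall s, a < s < b -> derivable_pt_lim U s (- k * U s)) ->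
  (forall s, a <= s <= b -> continuous_within a b U s) ->
  exp (k * b) * U b = exp (k * a) * U a.
Proof.
  intros Hab HU Hcont.
  set (G := fun s => exp (k * s) * U (clamp a b s)).
  destruct (MVT_gen G a b (fun _ => 0)) as [c [_ Hc]].
  - rewrite Rmin_left, Rmax_right by lra; intros s Hs.
    apply (is_derive_ext_loc (fun s => exp (k * s) * U s)).
    + apply (locally_interval _ s a b); simpl; try lra.
      intros y Hay Hyb; unfold G; rewrite clamp_id by lra; reflexivity.
    + replace 0 with (k * exp (k * s) * U s + exp (k * s) * (- k * U s)) by ring.
      apply (is_derive_mult (fun s => exp (k * s)) U).
      * auto_derive; [easy | ring].
      * apply is_derive_Reals, HU, Hs.
      * intros; apply Rmult_comm.
  - rewrite Rmin_left, Rmax_right by lra; intros s Hs.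
    apply continuity_pt_mult.
    + apply derivable_continuous_pt, derivable_pt_comp;
        [apply derivable_pt_scal, derivable_pt_id | apply derivable_pt_exp].
    + apply continuity_pt_clamp, Hcont; assumption.
  - unfold G in Hc; rewrite !clamp_id in Hc by lra; lra.
Qed.

Lemma derive_within_interior S g y d r : derive_within S g y d -> 0 < r ->
  (forall z, Rabs (z - y) < r -> S z) -> derivable_pt_lim g y d.
Proof.
  intros Hg Hr HS eps Heps.
  destruct (Hg eps Heps) as [delta [Hdelta Hquot]].
  assert (Hpos : 0 < Rmin delta r) by (apply Rmin_pos; lra).
  exists (mkposreal _ Hpos); intros h Hh0 Hh; simpl in Hh.
  pose proof (Rmin_l delta r); pose proof (Rmin_r delta r).
  apply Hquot; [exact Hh0 | lra |].
  apply HS; replace (y + h - y) with h by ring; lra.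
Qed.

Lemma derive_within_space_unique D g G y d d' : 0 < D -> in_space D y ->
  (forall z, in_space D z -> g z = G z) ->
  derive_within (in_space D) g y d -> derivable_pt_lim G y d' -> d = d'.
Proof.
  intros HD Hy Heq Hg HG; apply cond_eq; intros eps Heps.
  destruct (Hg (eps / 2)) as [d1 [Hd1 K1]]; [lra |].
  destruct (HG (eps / 2)) as [[d2 Hd2] K2]; [lra |]; simpl in K2.
  pose proof (Rmin_l (Rmin d1 d2) D); pose proof (Rmin_r (Rmin d1 d2) D).
  pose proof (Rmin_l d1 d2); pose proof (Rmin_r d1 d2).
  assert (Hmin : 0 < Rmin (Rmin d1 d2) D) by (repeat apply Rmin_pos; lra).
  assert (Hstep : exists h, h <> 0 /\ Rabs h < Rmin d1 d2 /\ in_space D (y + h)).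
  { unfold in_space in *; set (m := Rmin (Rmin d1 d2) D / 2).
    destruct (Rle_dec y (D / 2)); [exists m | exists (- m)];
      rewrite ?Rabs_Ropp, Rabs_pos_eq by (unfold m; lra);
      unfold m; repeat split; try intro; lra. }
  destruct Hstep as [h [Hh0 [Habs Hyh]]].
  specialize (K1 h Hh0 ltac:(lra) Hyh); specialize (K2 h Hh0 ltac:(lra)).
  rewrite <- (Heq _ Hyh), <- (Heq _ Hy) in K2.
  split_Rabs; lra.
Qed.

Lemma C1_Omega_mvt_x D u ux ut x x' t : C1_Omega D u ux ut ->
  0 < x < D -> 0 < x' < D -> in_time t ->
  exists c, Rmin x x' <= c <= Rmax x x' /\ u x' t - u x t = ux c t * (x' - x).
Proof.
  intros [_ [_ [_ Hd]]] Hx Hx' Ht.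
  assert (Hder : forall y, 0 < y < D -> derivable_pt_lim (fun z => u z t) y (ux y t)).
  { intros y Hy; pose proof (Rmin_l y (D - y)); pose proof (Rmin_r y (D - y)).
    apply (derive_within_interior (in_space D) _ _ _ (Rmin y (D - y))).
    - apply (Hd y t); split; [red; lra | exact Ht].
    - apply Rmin_pos; lra.
    - intros z Hz; unfold in_space; split_Rabs; lra. }
  assert (Hbetween : forall y, Rmin x x' <= y <= Rmax x x' -> 0 < y < D)
    by (intros y; unfold Rmin, Rmax; destruct Rle_dec; lra).
  destruct (MVT_gen (fun z => u z t) x x' (fun z => ux z t)) as [c [Hc Hmvt]].
  - intros y Hy; apply is_derive_Reals, Hder, Hbetween; lra.
  - intros y Hy; apply derivable_continuous_pt; exists (ux y t).
    apply Hder, Hbetween, Hy.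
  - exists c; split; assumption.
Qed.

(* The mean value theorem in x and the joint continuity of u_x handle the
   spatial increment. *)
Lemma C1_Omega_derive_line D u ux ut a x0 s0 : C1_Omega D u ux ut ->
  0 < x0 < D -> 0 < s0 ->
  derivable_pt_lim (fun s => u (x0 + a * (s - s0)) s) s0 (a * ux x0 s0 + ut x0 s0).
Proof.
  intros Hu Hx Hs eps Heps; pose proof Hu as [_ [Cux [_ Hd]]].
  assert (HO : in_Omega D x0 s0) by (split; red; lra).
  pose proof (Rabs_pos a) as Ha.
  destruct (Cux x0 s0 HO (eps / 2 / (Rabs a + 1))) as [d1 [Hd1 Cont]];
    [apply Rdiv_lt_0_compat; lra |].
  destruct (proj2 (Hd x0 s0 HO) (eps / 2)) as [d2 [Hd2 Dt]]; [lra |].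
  set (m := Rmin (Rmin d1 d2) (Rmin s0 (Rmin x0 (D - x0)))).
  assert (Hm : 0 < m) by (unfold m; repeat apply Rmin_pos; lra).
  assert (Hm_le : m <= d1 /\ m <= d2 /\ m <= s0 /\ m <= x0 /\ m <= D - x0).
  { unfold m; pose proof (Rmin_l (Rmin d1 d2) (Rmin s0 (Rmin x0 (D - x0)))).
    pose proof (Rmin_r (Rmin d1 d2) (Rmin s0 (Rmin x0 (D - x0)))).
    pose proof (Rmin_l d1 d2); pose proof (Rmin_r d1 d2).
    pose proof (Rmin_l s0 (Rmin x0 (D - x0))); pose proof (Rmin_r s0 (Rmin x0 (D - x0))).
    pose proof (Rmin_l x0 (D - x0)); pose proof (Rmin_r x0 (D - x0)); lra. }
  assert (Hpos : 0 < m / (Rabs a + 1)) by (apply Rdiv_lt_0_compat; lra).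
  exists (mkposreal _ Hpos); intros h Hh0 Hh; simpl in Hh.
  pose proof (Rabs_pos h).
  assert (Hscaled : (Rabs a + 1) * Rabs h < m).
  { replace m with ((Rabs a + 1) * (m / (Rabs a + 1))) by (field; lra).
    apply Rmult_lt_compat_l; lra. }
  assert (Hah : Rabs (a * h) < m) by (rewrite Rabs_mult; nra).
  assert (Hhm : Rabs h < m) by nra.
  assert (Hxh : 0 < x0 + a * h < D) by (split_Rabs; lra).
  destruct (C1_Omega_mvt_x D u ux ut x0 (x0 + a * h) (s0 + h) Hu Hx Hxh)
    as [c [Hc Hmvt]]; [red; split_Rabs; lra |].
  assert (Hcx : Rabs (c - x0) <= Rabs (a * h))
    by (revert Hc; unfold Rmin, Rmax; destruct Rle_dec; split_Rabs; lra).
  assert (HcO : in_Omega D c (s0 + h))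
    by (split; red; revert Hc; unfold Rmin, Rmax; destruct Rle_dec; split_Rabs; lra).
  specialize (Cont c (s0 + h) HcO ltac:(lra) ltac:(ring_simplify (s0 + h - s0); lra)).
  specialize (Dt h Hh0 ltac:(lra) ltac:(red; split_Rabs; lra)).
  cbv beta.
  replace ((u (x0 + a * (s0 + h - s0)) (s0 + h) - u (x0 + a * (s0 - s0)) s0) / h
           - (a * ux x0 s0 + ut x0 s0))
    with (a * (ux c (s0 + h) - ux x0 s0) + ((u x0 (s0 + h) - u x0 s0) / h - ut x0 s0)).
  2:{ replace (x0 + a * (s0 + h - s0)) with (x0 + a * h) by ring.
      replace (x0 + a * (s0 - s0)) with x0 by ring.
      replace (u (x0 + a * h) (s0 + h) - u x0 s0)
        with ((u (x0 + a * h) (s0 + h) - u x0 (s0 + h)) + (u x0 (s0 + h) - u x0 s0)) by ring.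
      rewrite Hmvt; field; exact Hh0. }
  assert (Rabs a * Rabs (ux c (s0 + h) - ux x0 s0) <= eps / 2).
  { apply Rle_trans with (Rabs a * (eps / 2 / (Rabs a + 1))); [apply Rmult_le_compat_l; lra |].
    apply Rmult_le_reg_r with (Rabs a + 1); [lra |].
    replace (Rabs a * (eps / 2 / (Rabs a + 1)) * (Rabs a + 1)) with (Rabs a * (eps / 2))
      by (field; lra).
    nra. }
  eapply Rle_lt_trans; [apply Rabs_triang |]; rewrite Rabs_mult; lra.
Qed.

Lemma segment_in_space D a x s1 s2 s : in_space D x -> in_space D (x + a * (s1 - s2)) ->
  s1 <= s <= s2 -> in_space D (x + a * (s - s2)).
Proof. unfold in_space; intros Hx Hx1 Hs; destruct (Rle_dec 0 a); nra. Qed.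

Lemma segment_interior D a x s1 s2 s : a <> 0 -> in_space D x ->
  in_space D (x + a * (s1 - s2)) -> s1 < s < s2 -> 0 < x + a * (s - s2) < D.
Proof.
  unfold in_space; intros Ha Hx Hx1 Hs.
  destruct (Rtotal_order a 0) as [Hneg | [Hzero | Hpos]]; [nra | contradiction | nra].
Qed.

Lemma cont_Omega_line D u a x s1 s2 y : cont_Omega D u -> 0 <= s1 ->
  (forall s, s1 <= s <= s2 -> in_space D (x + a * (s - s2))) -> s1 <= y <= s2 ->
  continuous_within s1 s2 (fun s => u (x + a * (s - s2)) s) y.
Proof.
  intros Hu Hs1 Hline Hy eps Heps.
  pose proof (Rabs_pos a) as Ha.
  destruct (Hu (x + a * (y - s2)) y) with (eps := eps) as [delta [Hdelta Hclose]];
    [split; [apply Hline; lra | red; lra] | exact Heps |].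
  exists (delta / (Rabs a + 1)); split; [apply Rdiv_lt_0_compat; lra |].
  intros s Hs Hsy.
  assert (Hscaled : (Rabs a + 1) * Rabs (s - y) < delta).
  { replace delta with ((Rabs a + 1) * (delta / (Rabs a + 1))) by (field; lra).
    apply Rmult_lt_compat_l; lra. }
  pose proof (Rabs_pos (s - y)).
  apply Hclose; [split; [apply Hline; lra | red; lra] | | nra].
  replace (x + a * (s - s2) - (x + a * (y - s2))) with (a * (s - y)) by ring.
  rewrite Rabs_mult; nra.
Qed.

Lemma C1_Omega_characteristic D u ux ut k a x s1 s2 : C1_Omega D u ux ut -> a <> 0 ->
  0 <= s1 <= s2 -> in_space D x -> in_space D (x + a * (s1 - s2)) ->
  (forall y s, 0 < y < D -> s1 < s < s2 -> k * u y s + a * ux y s + ut y s = 0) ->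
  exp (k * s2) * u x s2 = exp (k * s1) * u (x + a * (s1 - s2)) s1.
Proof.
  intros Hu Ha Hs Hx Hx1 Hpde.
  pose proof (ode_exp_invariant (fun s => u (x + a * (s - s2)) s) k s1 s2) as Hode.
  cbv beta in Hode; replace (x + a * (s2 - s2)) with x in Hode by ring.
  apply Hode; [lra | |].
  - intros s Hs'.
    pose proof (segment_interior D a x s1 s2 s Ha Hx Hx1 Hs') as Hin.
    pose proof (C1_Omega_derive_line D u ux ut a (x + a * (s - s2)) s Hu Hin ltac:(lra))
      as Hline.
    apply is_derive_Reals in Hline; apply is_derive_Reals.
    replace (- k * u (x + a * (s - s2)) s)
      with (a * ux (x + a * (s - s2)) s + ut (x + a * (s - s2)) s)
      by (pose proof (Hpde _ s Hin ltac:(lra)); lra).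
    apply (is_derive_ext (fun r => u (x + a * (s - s2) + a * (r - s)) r)); [| exact Hline].
    intros r; f_equal; ring.
  - intros s Hs'; apply (cont_Omega_line D); [apply Hu | lra | | exact Hs'].
    intros r Hr; apply (segment_in_space D a x s1 s2 r Hx Hx1 Hr).
Qed.

Lemma sup_norm_spec D f M : 0 <= D -> (forall x, in_space D x -> Rabs (f x) <= M) ->
  (forall x, in_space D x -> Rabs (f x) <= sup_norm D f) /\ sup_norm D f <= M.
Proof.
  intros HD HM; unfold sup_norm.
  set (E := fun r => exists x, 0 <= x <= D /\ r = Rabs (f x)).
  destruct (Lub_Rbar_correct E) as [Hub Hlub].
  assert (Hle : Rbar_le (Lub_Rbar E) M)
    by (apply Hlub; intros r [x [Hx ->]]; apply HM, Hx).
  assert (Hge : forall x, in_space D x -> Rbar_le (Rabs (f x)) (Lub_Rbar E))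
    by (intros x Hx; apply Hub; exists x; auto).
  pose proof (Hge 0 ltac:(red; lra)) as H0.
  revert Hle H0 Hge; destruct (Lub_Rbar E) as [l | |]; simpl; tauto.
Qed.

Lemma telescoping_bound (g : nat -> R) c n :
  (forall i, (i < n)%nat -> Rabs (g (S i) - g i) <= c) -> Rabs (g n - g O) <= c * INR n.
Proof.
  induction n as [| n IH]; intros Hstep.
  - rewrite Rminus_diag, Rabs_R0; simpl; lra.
  - rewrite S_INR.
    replace (g (S n) - g O) with ((g (S n) - g n) + (g n - g O)) by ring.
    eapply Rle_trans; [apply Rabs_triang |].
    pose proof (Hstep n (Nat.lt_succ_diag_r n)).
    pose proof (IH (fun i Hi => Hstep i (Nat.lt_lt_succ_r _ _ Hi))); lra.
Qed.

Lemma cont_Omega_uniform D T f : cont_Omega D f ->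
  exists d, 0 < d /\ forall x t x' t', in_space D x -> 0 <= t <= T ->
    in_space D x' -> 0 <= t' <= T -> Rabs (x - x') < d -> Rabs (t - t') < d ->
    Rabs (f x t - f x' t') < 2.
Proof.
  intros Hf.
  assert (Hradius : forall x t, {r : posreal | in_Omega D x t -> forall x' t',
    in_Omega D x' t' -> Rabs (x' - x) < r -> Rabs (t' - t) < r ->
    Rabs (f x' t' - f x t) < 1}).
  { intros x t; apply constructive_indefinite_description.
    destruct (classic (in_Omega D x t)) as [Hin | Hout].
    - destruct (Hf x t Hin 1 Rlt_0_1) as [r [Hr Hclose]].
      exists (mkposreal r Hr); intros _; exact Hclose.
    - exists (mkposreal 1 Rlt_0_1); intros Hin; contradiction. }
  (* a Lebesgue number for the cover by balls of half the radius of 1-continuity *)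
  destruct (compactness_value_2d 0 D 0 T (fun x t => pos_div_2 (proj1_sig (Hradius x t))))
    as [[d Hd] Hcover]; simpl in Hcover.
  exists d; split; [exact Hd |].
  intros x t x' t' Hx Ht Hx' Ht' Hxx Htt.
  apply NNPP; intros Hfar; apply (Hcover x t Hx Ht).
  intros [p [q [Hp [Hq [Hxp [Htq Hdr]]]]]]; apply Hfar.
  destruct (Hradius p q) as [r Hr]; simpl in *.
  unfold in_space in *.
  assert (Hpq : in_Omega D p q) by (split; red; lra).
  assert (Close1 : Rabs (f x t - f p q) < 1)
    by (apply Hr; [exact Hpq | split; red | |]; lra).
  assert (Close2 : Rabs (f x' t' - f p q) < 1)
    by (apply Hr; [exact Hpq | split; red | |]; split_Rabs; lra).
  split_Rabs; lra.
Qed.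

Lemma cont_Omega_bounded D T f : 0 <= D -> 0 <= T -> cont_Omega D f ->
  exists B, forall x t, in_space D x -> 0 <= t <= T -> Rabs (f x t) <= B.
Proof.
  intros HD HT Hf.
  destruct (cont_Omega_uniform D T f Hf) as [d [Hd Hunif]].
  destruct (INR_archimed d (D + T)) as [n Hn]; [lra |].
  assert (Hn0 : 0 < INR n) by (destruct (Rle_lt_dec (INR n) 0); nra).
  exists (Rabs (f 0 0) + 2 * INR n); intros x t Hx Ht.
  (* walk from (0, 0) to (x, t) in n steps shorter than d *)
  set (g := fun i => f (x * INR i / INR n) (t * INR i / INR n)).
  assert (Hwalk : Rabs (g n - g O) <= 2 * INR n).
  { apply telescoping_bound; intros i Hi; left; unfold g.
    assert (Hi1 : INR (S i) <= INR n) by (apply le_INR; exact Hi).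
    pose proof (pos_INR i); rewrite S_INR in *; red in Hx.
    assert (Hfrac : forall z Z, 0 <= z <= Z -> Z < INR n * d ->
      0 <= z * INR i / INR n <= Z /\ 0 <= z * (INR i + 1) / INR n <= Z /\
      Rabs (z * (INR i + 1) / INR n - z * INR i / INR n) < d).
    { intros z Z Hz HZ.
      replace (z * (INR i + 1) / INR n - z * INR i / INR n) with (z / INR n) by (field; lra).
      rewrite Rabs_pos_eq by (apply Rdiv_le_0_compat; lra).
      repeat split; try apply Rdiv_le_0_compat; try nra;
        apply Rmult_le_reg_r with (INR n) || apply Rmult_lt_reg_r with (INR n); try lra;
        field_simplify; nra. }
    destruct (Hfrac x D Hx ltac:(lra)) as [Hx0 [Hx1 Hdx]].
    destruct (Hfrac t T Ht ltac:(lra)) as [Ht0 [Ht1 Hdt]].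
    apply Hunif; assumption. }
  unfold g in Hwalk; simpl INR in Hwalk.
  replace (x * INR n / INR n) with x in Hwalk by (field; lra).
  replace (t * INR n / INR n) with t in Hwalk by (field; lra).
  replace (x * 0 / INR n) with 0 in Hwalk by (field; lra).
  replace (t * 0 / INR n) with 0 in Hwalk by (field; lra).
  split_Rabs; lra.
Qed.

Lemma Rabs_le_sup_norm_cont D f x t : 0 <= D -> cont_Omega D f -> in_Omega D x t ->
  Rabs (f x t) <= sup_norm D (fun y => f y t).
Proof.
  intros HD Hf [Hx Ht]; red in Ht.
  destruct (cont_Omega_bounded D t f HD Ht Hf) as [B HB].
  apply (sup_norm_spec D (fun y => f y t) B HD); [| exact Hx].
  intros y Hy; apply HB; [exact Hy | lra].
Qed.

Lemma cont_Omega_sup_norm_nonneg D f t : 0 <= D -> cont_Omega D f -> 0 <= t ->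
  0 <= sup_norm D (fun y => f y t).
Proof.
  intros HD Hf Ht; eapply Rle_trans; [apply Rabs_pos |].
  apply (Rabs_le_sup_norm_cont D f 0 t HD Hf); split; red; lra.
Qed.

Lemma cont_Omega_sup_norm_bounded D T f : 0 <= D -> 0 <= T -> cont_Omega D f ->
  exists B, forall t, 0 <= t <= T -> sup_norm D (fun y => f y t) <= B.
Proof.
  intros HD HT Hf; destruct (cont_Omega_bounded D T f HD HT Hf) as [B HB].
  exists B; intros t Ht; apply (sup_norm_spec D (fun y => f y t) B HD).
  intros y Hy; apply HB; assumption.
Qed.

Lemma exp_decay_of_eventual_decay (N : R -> R) k T A B : 0 < k -> 0 <= T -> 0 <= A ->
  0 <= N 0 ->
  (forall t, 0 <= t <= T -> N t <= B) ->
  (forall t, T <= t -> N t <= A * exp (- k * t)) ->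
  (N 0 = 0 -> forall t, 0 <= t -> N t <= 0) ->
  exists mu, 0 < mu /\ forall t, 0 <= t -> N t <= mu * N 0 * exp (- (k / 2) * t).
Proof.
  intros Hk HT HA HN0 Hearly Hlate Hzero.
  destruct (Req_dec (N 0) 0) as [H0 | Hpos].
  { exists 1; split; [lra |]; intros t Ht.
    rewrite H0, Rmult_0_r, Rmult_0_l; apply Hzero; assumption. }
  set (C := Rmax B 0 * exp (k * T / 2) + A).
  assert (HC : forall t, 0 <= t -> N t <= C * exp (- (k / 2) * t)).
  { intros t Ht; unfold C.
    pose proof (Rmax_l B 0); pose proof (Rmax_r B 0).
    pose proof (exp_pos (- (k / 2) * t)); pose proof (exp_pos (k * T / 2)).
    destruct (Rle_lt_dec t T) as [HtT | HtT].
    - assert (Hgrow : 1 <= exp (k * T / 2) * exp (- (k / 2) * t)).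
      { rewrite <- exp_plus, <- exp_0; apply exp_le; nra. }
      pose proof (Hearly t (conj Ht HtT)); nra.
    - assert (exp (- k * t) <= exp (- (k / 2) * t)) by (apply exp_le; nra).
      assert (0 <= Rmax B 0 * exp (k * T / 2)) by (apply Rmult_le_pos; lra).
      pose proof (Hlate t ltac:(lra)); nra. }
  assert (HC0 : 0 <= C).
  { unfold C; pose proof (Rmax_r B 0); pose proof (exp_pos (k * T / 2)); nra. }
  exists (C / N 0 + 1); split.
  - assert (0 <= C / N 0) by (apply Rdiv_le_0_compat; lra); lra.
  - intros t Ht; pose proof (HC t Ht); pose proof (exp_pos (- (k / 2) * t)).
    replace ((C / N 0 + 1) * N 0) with (C + N 0) by (field; lra); nra.
Qed.

Lemma exp_mult_eq_inv a y w : exp a * y = w -> y = exp (- a) * w.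
Proof. intros H; rewrite <- H, <- Rmult_assoc, <- exp_plus; ring_simplify (- a + a); rewrite exp_0; ring. Qed.

Lemma C1_Omega_ux_const D u ux ut t c : 0 < D -> C1_Omega D u ux ut -> in_time t ->
  (forall y, in_space D y -> u y t = c) -> forall x, in_space D x -> ux x t = 0.
Proof.
  intros HD [_ [_ [_ Hd]]] Ht Hc x Hx.
  apply (derive_within_space_unique D (fun y => u y t) (fun _ => c) x); auto.
  - apply (Hd x t); split; assumption.
  - apply derivable_pt_lim_const.
Qed.

Definition state_norm (D : R) (rho rho_x v v_x : R -> R -> R) (t : R) : R :=
  C1_norm D (fun x => rho x t) (fun x => rho_x x t) + C1_norm D (fun x => v x t) (fun x => v_x x t).

Section ClosedLoop.

Variables (D k vb rb c4 c5 : R) (rho rho_x rho_t v v_x v_t : R -> R -> R).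
Hypothesis HD : 0 < D.
Hypothesis Hk : 0 < k.
Hypothesis Hvb : 0 < vb.
Hypothesis Hc4 : 0 < c4.
Hypothesis Hrho : C1_Omega D rho rho_x rho_t.
Hypothesis Hv : C1_Omega D v v_x v_t.
Hypothesis rho_pde : forall x t, in_Omega D x t -> rho_t x t + vb * rho_x x t + rb * v_x x t = 0.
Hypothesis v_pde : forall x t, in_Omega D x t -> v_t x t - c4 * v_x x t = - k * v x t.
Hypothesis v_bc : forall t, in_time t -> v_t D t = - k * v D t.
Hypothesis rho_bc : forall t, in_time t -> rho 0 t + c5 * v 0 t = 0.

Lemma v_boundary t : 0 <= t -> v D t = exp (- k * t) * v D 0.
Proof.
  intros Ht; pose proof Hv as [Cv [_ [_ Dv]]].
  assert (Hode : exp (k * t) * v D t = exp (k * 0) * v D 0).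
  2:{ rewrite Rmult_0_r, exp_0, Rmult_1_l in Hode.
      rewrite (exp_mult_eq_inv _ _ _ Hode), Ropp_mult_distr_l; reflexivity. }
  apply (ode_exp_invariant (fun s => v D s)); [exact Ht | |].
  - intros s Hs; rewrite <- v_bc by (red; lra).
    apply (derive_within_interior in_time _ _ _ s); [apply (Dv D s); split; red; lra | lra |].
    intros z Hz; red; split_Rabs; lra.
  - intros s Hs eps Heps.
    destruct (Cv D s ltac:(split; red; lra) eps Heps) as [delta [Hdelta Hclose]].
    exists delta; split; [exact Hdelta |]; intros r Hr Hrs.
    apply Hclose; [split; red; lra | rewrite Rminus_diag, Rabs_R0 | ]; lra.
Qed.

Lemma v_characteristic x t s : in_space D x -> 0 <= s <= t -> x + c4 * (t - s) <= D ->
  exp (k * t) * v x t = exp (k * s) * v (x + c4 * (t - s)) s.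
Proof.
  intros Hx Hs Hend.
  replace (x + c4 * (t - s)) with (x + - c4 * (s - t)) by ring.
  apply (C1_Omega_characteristic D v v_x v_t k (- c4)); auto; try lra.
  - red in Hx |- *; nra.
  - intros y r Hy Hr; pose proof (v_pde y r ltac:(split; red; lra)); lra.
Qed.

Lemma v_representation x t : in_space D x -> 0 <= t ->
  v x t = exp (- k * t) * v (Rmin (x + c4 * t) D) 0.
Proof.
  intros Hx Ht; red in Hx.
  destruct (Rle_dec (x + c4 * t) D) as [Hin | Hout].
  - rewrite Rmin_left by lra.
    pose proof (v_characteristic x t 0 Hx ltac:(lra) ltac:(lra)) as Hchar.
    rewrite Rminus_0_r, Rmult_0_r, exp_0, Rmult_1_l in Hchar.
    rewrite (exp_mult_eq_inv _ _ _ Hchar), Ropp_mult_distr_l; reflexivity.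
  - rewrite Rmin_right by lra.
    (* the characteristic through (x, t) meets x = D at time s *)
    set (s := t - (D - x) / c4).
    assert (Hcs : c4 * (t - s) = D - x) by (unfold s; field; lra).
    assert (Hs : 0 <= s <= t).
    { unfold s; split; [| assert (0 <= (D - x) / c4) by (apply Rdiv_le_0_compat; lra); lra].
      apply Rmult_le_reg_l with c4; [lra |].
      replace (c4 * (t - (D - x) / c4)) with (c4 * t - (D - x)) by (field; lra); lra. }
    pose proof (v_characteristic x t s Hx Hs ltac:(lra)) as Hchar.
    replace (x + c4 * (t - s)) with D in Hchar by lra.
    rewrite (v_boundary s) in Hchar by lra.
    rewrite <- Rmult_assoc, <- exp_plus in Hchar; ring_simplify (k * s + - k * s) in Hchar.
    rewrite exp_0, Rmult_1_l in Hchar.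
    rewrite (exp_mult_eq_inv _ _ _ Hchar), Ropp_mult_distr_l; reflexivity.
Qed.

Lemma v_late x t : in_space D x -> D / c4 <= t -> v x t = exp (- k * t) * v D 0.
Proof.
  intros Hx Ht.
  assert (Hct : D <= c4 * t).
  { apply Rmult_le_compat_l with (r := c4) in Ht; [| lra].
    replace (c4 * (D / c4)) with D in Ht by (field; lra); exact Ht. }
  assert (0 <= D / c4) by (apply Rdiv_le_0_compat; lra).
  rewrite v_representation by (red in Hx |- *; lra).
  red in Hx; rewrite Rmin_right by lra; reflexivity.
Qed.

Lemma v_x_late x t : in_space D x -> D / c4 <= t -> v_x x t = 0.
Proof.
  intros Hx Ht; assert (0 <= D / c4) by (apply Rdiv_le_0_compat; lra).
  apply (C1_Omega_ux_const D v v_x v_t t (exp (- k * t) * v D 0)); auto.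
  - red; lra.
  - intros y Hy; apply v_late; assumption.
Qed.

Lemma rho_characteristic x t s : in_space D x -> 0 <= s <= t -> 0 <= x - vb * (t - s) ->
  (forall y r, in_space D y -> s < r < t -> v_x y r = 0) ->
  rho x t = rho (x - vb * (t - s)) s.
Proof.
  intros Hx Hs Hend Hvx.
  replace (x - vb * (t - s)) with (x + vb * (s - t)) in * by ring.
  pose proof (C1_Omega_characteristic D rho rho_x rho_t 0 vb x s t Hrho) as Hchar.
  rewrite !Rmult_0_l, exp_0, !Rmult_1_l in Hchar; apply Hchar; auto; try lra.
  - red in Hx |- *; nra.
  - intros y r Hy Hr; pose proof (rho_pde y r ltac:(split; red; lra)) as Hpde.
    rewrite (Hvx y r ltac:(red; lra) Hr) in Hpde; lra.
Qed.

Lemma rho_from_boundary x t : in_space D x -> x / vb <= t ->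
  (forall y r, in_space D y -> t - x / vb < r < t -> v_x y r = 0) ->
  rho x t = - c5 * v 0 (t - x / vb).
Proof.
  intros Hx Ht Hvx; red in Hx.
  assert (Hxv : vb * (x / vb) = x) by (field; lra).
  assert (0 <= x / vb) by (apply Rdiv_le_0_compat; lra).
  pose proof (rho_characteristic x t (t - x / vb)) as Hchar.
  replace (t - (t - x / vb)) with (x / vb) in Hchar by ring.
  rewrite Hxv, Rminus_diag in Hchar.
  rewrite Hchar; try (red; lra); try lra; [| intros y r Hy Hr; apply Hvx; auto; lra].
  pose proof (rho_bc (t - x / vb) ltac:(red; lra)); lra.
Qed.

Lemma rho_late x t : in_space D x -> D / c4 + D / vb <= t ->
  rho x t = - c5 * v D 0 * exp (- k * (t - x / vb)).
Proof.
  intros Hx Ht.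
  assert (Hxv : x / vb <= D / vb)
    by (red in Hx; apply Rmult_le_compat_r; [left; apply Rinv_0_lt_compat |]; lra).
  assert (0 <= x / vb) by (red in Hx; apply Rdiv_le_0_compat; lra).
  assert (0 <= D / c4) by (apply Rdiv_le_0_compat; lra).
  rewrite rho_from_boundary by (try intros y r Hy Hr; try apply v_x_late; auto; lra).
  rewrite (v_late 0) by (red; lra); ring.
Qed.

Lemma rho_x_late x t : in_space D x -> D / c4 + D / vb <= t ->
  rho_x x t = - c5 * v D 0 * (k / vb) * exp (- k * (t - x / vb)).
Proof.
  intros Hx Ht; pose proof Hrho as [_ [_ [_ Hd]]].
  assert (0 <= D / c4 + D / vb)
    by (assert (0 <= D / c4) by (apply Rdiv_le_0_compat; lra);
        assert (0 <= D / vb) by (apply Rdiv_le_0_compat; lra); lra).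
  apply (derive_within_space_unique D (fun y => rho y t)
    (fun y => - c5 * v D 0 * exp (- k * (t - y / vb))) x); auto.
  - intros y Hy; apply rho_late; assumption.
  - apply (Hd x t); split; [exact Hx | red; lra].
  - apply is_derive_Reals; auto_derive; [easy |].
    replace (t + - (x * / vb)) with (t - x / vb) by (unfold Rdiv; ring); field; lra.
Qed.

Lemma state_norm_bounded T : 0 <= T ->
  exists B, forall t, 0 <= t <= T -> state_norm D rho rho_x v v_x t <= B.
Proof.
  intros HT; pose proof Hrho as [Cr [Crx _]]; pose proof Hv as [Cv [Cvx _]].
  destruct (cont_Omega_sup_norm_bounded D T rho) as [B1 H1]; try lra; auto.
  destruct (cont_Omega_sup_norm_bounded D T rho_x) as [B2 H2]; try lra; auto.
  destruct (cont_Omega_sup_norm_bounded D T v) as [B3 H3]; try lra; auto.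
  destruct (cont_Omega_sup_norm_bounded D T v_x) as [B4 H4]; try lra; auto.
  exists (B1 + B2 + B3 + B4); intros t Ht; unfold state_norm, C1_norm.
  pose proof (H1 t Ht); pose proof (H2 t Ht); pose proof (H3 t Ht); pose proof (H4 t Ht); lra.
Qed.

Lemma state_norm_nonneg t : 0 <= t -> 0 <= state_norm D rho rho_x v v_x t.
Proof.
  intros Ht; pose proof Hrho as [Cr [Crx _]]; pose proof Hv as [Cv [Cvx _]].
  unfold state_norm, C1_norm.
  pose proof (cont_Omega_sup_norm_nonneg D rho t); pose proof (cont_Omega_sup_norm_nonneg D rho_x t).
  pose proof (cont_Omega_sup_norm_nonneg D v t); pose proof (cont_Omega_sup_norm_nonneg D v_x t).
  assert (0 <= D) by lra; intuition lra.
Qed.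

Lemma state_norm_zero : state_norm D rho rho_x v v_x 0 = 0 ->
  forall t, 0 <= t -> state_norm D rho rho_x v v_x t <= 0.
Proof.
  intros H0 t Ht; pose proof Hrho as [Cr [Crx _]]; pose proof Hv as [Cv [Cvx _]].
  assert (HD0 : 0 <= D) by lra.
  assert (Hzero : forall f, cont_Omega D f -> sup_norm D (fun x => f x 0) = 0 ->
    forall x, in_space D x -> f x 0 = 0).
  { intros f Hf Hsup x Hx; apply Rabs_eq_0, Rle_antisym; [| apply Rabs_pos].
    rewrite <- Hsup at 2; apply (Rabs_le_sup_norm_cont D f x 0); auto; split; [exact Hx | red; lra]. }
  unfold state_norm, C1_norm in H0.
  pose proof (cont_Omega_sup_norm_nonneg D rho 0 HD0 Cr (Rle_refl 0)).
  pose proof (cont_Omega_sup_norm_nonneg D rho_x 0 HD0 Crx (Rle_refl 0)).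
  pose proof (cont_Omega_sup_norm_nonneg D v 0 HD0 Cv (Rle_refl 0)).
  pose proof (cont_Omega_sup_norm_nonneg D v_x 0 HD0 Cvx (Rle_refl 0)).
  assert (rho0 : forall x, in_space D x -> rho x 0 = 0) by (apply Hzero; [exact Cr | lra]).
  assert (v0 : forall x, in_space D x -> v x 0 = 0) by (apply Hzero; [exact Cv | lra]).
  assert (vz : forall x s, in_space D x -> 0 <= s -> v x s = 0).
  { intros x s Hx Hs; rewrite v_representation by assumption.
    rewrite v0; [ring |].
    red in Hx |- *; unfold Rmin; destruct Rle_dec; nra. }
  assert (vxz : forall x s, in_space D x -> 0 <= s -> v_x x s = 0)
    by (intros x s Hx Hs; apply (C1_Omega_ux_const D v v_x v_t s 0); auto; intros; apply vz; auto).
  assert (rhoz : forall x s, in_space D x -> 0 <= s -> rho x s = 0).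
  { intros x s Hx Hs; red in Hx; destruct (Rle_dec (vb * s) x) as [Hin | Hout].
    - rewrite (rho_characteristic x s 0); rewrite ?Rminus_0_r; try (red; lra); try lra.
      + apply rho0; red; nra.
      + intros y r Hy Hr; apply vxz; [exact Hy | lra].
    - assert (Hxs : x / vb <= s).
      { apply Rmult_le_reg_l with vb; [lra |].
        replace (vb * (x / vb)) with x by (field; lra); lra. }
      rewrite rho_from_boundary, vz; try (red; lra); try lra.
      intros y r Hy Hr; apply vxz; auto.
      assert (0 <= x / vb) by (apply Rdiv_le_0_compat; lra); lra. }
  assert (rhoxz : forall x s, in_space D x -> 0 <= s -> rho_x x s = 0)
    by (intros x s Hx Hs; apply (C1_Omega_ux_const D rho rho_x rho_t s 0); auto; intros; apply rhoz; auto).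
  unfold state_norm, C1_norm.
  assert (Hsup : forall f : R -> R -> R, (forall x, in_space D x -> f x t = 0) ->
    sup_norm D (fun x => f x t) <= 0).
  { intros f Hf; apply (sup_norm_spec D _ 0 HD0).
    intros x Hx; rewrite Hf, Rabs_R0 by exact Hx; lra. }
  pose proof (Hsup rho (fun x Hx => rhoz x t Hx Ht)).
  pose proof (Hsup rho_x (fun x Hx => rhoxz x t Hx Ht)).
  pose proof (Hsup v (fun x Hx => vz x t Hx Ht)).
  pose proof (Hsup v_x (fun x Hx => vxz x t Hx Ht)).
  lra.
Qed.

Lemma state_norm_late : exists A, 0 <= A /\
  forall t, D / c4 + D / vb <= t -> state_norm D rho rho_x v v_x t <= A * exp (- k * t).
Proof.
  assert (HD0 : 0 <= D) by lra.
  assert (HDc4 : 0 <= D / c4) by (apply Rdiv_le_0_compat; lra).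
  assert (HDvb : 0 <= D / vb) by (apply Rdiv_le_0_compat; lra).
  set (E := exp (k * (D / vb))).
  assert (Hshift : forall x t, in_space D x -> exp (- k * (t - x / vb)) <= exp (- k * t) * E).
  { intros x t Hx; red in Hx; unfold E; rewrite <- exp_plus; apply exp_le.
    assert (x / vb <= D / vb) by (apply Rmult_le_compat_r; [left; apply Rinv_0_lt_compat |]; lra).
    nra. }
  set (a := Rabs c5 * Rabs (v D 0)).
  assert (Ha : 0 <= a) by (apply Rmult_le_pos; apply Rabs_pos).
  assert (HE : 0 < E) by apply exp_pos.
  assert (Hkvb : 0 < k / vb) by (apply Rdiv_lt_0_compat; lra).
  exists (a * E + a * (k / vb) * E + Rabs (v D 0)); split.
  { pose proof (Rabs_pos (v D 0)); assert (0 <= a * (k / vb)) by nra; nra. }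
  intros t Ht; unfold state_norm, C1_norm.
  assert (He : 0 < exp (- k * t)) by apply exp_pos.
  assert (Hsup : forall f M, (forall x, in_space D x -> Rabs (f x) <= M * exp (- k * t)) ->
    sup_norm D f <= M * exp (- k * t)) by (intros f M; apply (sup_norm_spec D f _ HD0)).
  assert (Hrho_t : sup_norm D (fun x => rho x t) <= a * E * exp (- k * t)).
  { apply Hsup; intros x Hx; rewrite rho_late by assumption.
    rewrite !Rabs_mult, Rabs_Ropp, (Rabs_pos_eq (exp _)) by (left; apply exp_pos); fold a.
    pose proof (Hshift x t Hx); nra. }
  assert (Hrho_x_t : sup_norm D (fun x => rho_x x t) <= a * (k / vb) * E * exp (- k * t)).
  { apply Hsup; intros x Hx; rewrite rho_x_late by assumption.
    rewrite !Rabs_mult, Rabs_Ropp, (Rabs_pos_eq (exp _)), (Rabs_pos_eq (k / vb))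
      by (try left; try apply exp_pos; lra); fold a.
    pose proof (Hshift x t Hx); assert (0 <= a * (k / vb)) by nra; nra. }
  assert (Hv_t : sup_norm D (fun x => v x t) <= Rabs (v D 0) * exp (- k * t)).
  { apply Hsup; intros x Hx; rewrite v_late by (auto; lra).
    rewrite Rabs_mult, (Rabs_pos_eq (exp _)) by (left; apply exp_pos); lra. }
  assert (Hv_x_t : sup_norm D (fun x => v_x x t) <= 0 * exp (- k * t)).
  { apply Hsup; intros x Hx; rewrite v_x_late by (auto; lra); rewrite Rabs_R0; lra. }
  lra.
Qed.

Theorem closed_loop_exp_decay : exists mu, 0 < mu /\ forall t, 0 <= t ->
  state_norm D rho rho_x v v_x t <= mu * state_norm D rho rho_x v v_x 0 * exp (- (k / 2) * t).
Proof.
  assert (HT : 0 <= D / c4 + D / vb)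
    by (assert (0 <= D / c4) by (apply Rdiv_le_0_compat; lra);
        assert (0 <= D / vb) by (apply Rdiv_le_0_compat; lra); lra).
  destruct state_norm_late as [A [HA Hlate]].
  destruct (state_norm_bounded (D / c4 + D / vb) HT) as [B Hearly].
  apply (exp_decay_of_eventual_decay _ k (D / c4 + D / vb) A B); auto.
  - apply state_norm_nonneg; lra.
  - apply state_norm_zero.
Qed.

End ClosedLoop.

Lemma h_mix_pos alpha tau_acc tau_m h_m hbar_acc : 0 < alpha <= 1 -> 0 < tau_acc ->
  0 < tau_m -> 0 < h_m -> 0 < hbar_acc -> 0 < h_mix alpha tau_acc tau_m h_m hbar_acc.
Proof.
  intros Ha Hacc Hm Hhm Hhacc; unfold h_mix.
  assert (0 <= (1 - alpha) * (tau_acc / tau_m))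
    by (apply Rmult_le_pos; [lra | apply Rdiv_le_0_compat; lra]).
  assert (0 <= (1 - alpha) * (tau_acc / tau_m) * (hbar_acc / h_m))
    by (apply Rmult_le_pos; [lra | apply Rdiv_le_0_compat; lra]).
  apply Rmult_lt_0_compat; [apply Rdiv_lt_0_compat |]; lra.
Qed.

Lemma vbar_pos L q hmix : 0 < L -> 0 < q -> q * hmix < 1 -> 0 < vbar L q hmix.
Proof.
  intros HL Hq Hqh; unfold vbar; apply Rdiv_lt_0_compat; [exact HL |].
  replace (/ q - hmix) with ((1 - q * hmix) / q) by (field; lra).
  apply Rdiv_lt_0_compat; lra.
Qed.

Lemma rhobar_inv_sub L q hmix : 0 < L -> 0 < q -> q * hmix < 1 ->
  / rhobar L q hmix - L = hmix * vbar L q hmix.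
Proof.
  intros HL Hq Hqh; pose proof (vbar_pos L q hmix HL Hq Hqh) as Hvb.
  assert (Hden : / q - hmix <> 0)
    by (replace (/ q - hmix) with ((1 - q * hmix) / q) by (field; lra);
        apply Rgt_not_eq, Rdiv_lt_0_compat; lra).
  unfold rhobar; unfold vbar in *; field; repeat split; lra || auto.
Qed.

Lemma cst3_pos alpha tau_acc hbar_acc rb L : 0 < alpha -> 0 < tau_acc -> 0 < hbar_acc ->
  L < / rb -> 0 < cst3 alpha tau_acc hbar_acc rb L.
Proof.
  intros Ha Hacc Hh HL; unfold cst3.
  apply Rmult_lt_0_compat; [apply Rdiv_lt_0_compat; [| apply Rmult_lt_0_compat] | ]; nra.
Qed.

Lemma control_law_closes_loop K1 K2 K3 k r w h : K3 <> 0 ->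
  h = / K3 * (- K1 * r + (k - K2) * w) -> - K1 * r - K2 * w - K3 * h = - k * w.
Proof. intros HK3 ->; field; exact HK3. Qed.

Theorem theorem1
  (L D alpha tau_acc tau_m h_m hbar_acc k q_in : R)
  (HL : 0 < L) (HD : 0 < D) (Halpha : 0 < alpha <= 1)
  (Htacc : 0 < tau_acc) (Htm : 0 < tau_m) (Hhm : 0 < h_m)
  (Hhacc : 0 < hbar_acc) (Hk : 0 < k)
  (Hq : 0 < q_in)
  (Hqh : q_in * h_mix alpha tau_acc tau_m h_m hbar_acc < 1)
  (rho v h_acc rho_x rho_t v_x v_t : R -> R -> R) :
  let tmix := tau_mix alpha tau_acc tau_m in
  let hmix := h_mix alpha tau_acc tau_m h_m hbar_acc in
  let vb := vbar L q_in hmix in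
  let rb := rhobar L q_in hmix in
  let K1 := cst1 rb tmix hmix in
  let K2 := cst2 tmix in
  let K3 := cst3 alpha tau_acc hbar_acc rb L in
  let K4 := cst4 L hmix in
  let K5 := cst5 rb vb in
  (* classical C^1 solution on [0,D] x [0,+oo) *)
  C1_Omega D rho rho_x rho_t ->
  C1_Omega D v v_x v_t ->
  (* control law *)
  (forall x t, in_Omega D x t ->
     h_acc x t = / K3 * (- K1 * rho x t + (k - K2) * v x t)) ->
  (* PDEs *)
  (forall x t, in_Omega D x t ->
     rho_t x t + vb * rho_x x t + rb * v_x x t = 0) ->
  (forall x t, in_Omega D x t ->
     v_t x t - K4 * v_x x t = - K1 * rho x t - K2 * v x t - K3 * h_acc x t) ->
  (* boundary conditions *)
  (forall t, in_time t -> rho 0 t + K5 * v 0 t = 0) ->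
  (forall t, in_time t ->
     v_t D t = - K1 * rho D t - K2 * v D t - K3 * h_acc D t) ->
  (* first-order compatibility of the initial data *)
  rho 0 0 + K5 * v 0 0 = 0 ->
  - vb * rho_x 0 0 - rb * v_x 0 0 + K5 * (K4 * v_x 0 0 - k * v 0 0) = 0 ->
  v_x D 0 = 0 ->
  exists mu, 0 < mu /\
    forall t, 0 <= t ->
      C1_norm D (fun x => rho x t) (fun x => rho_x x t)
      + C1_norm D (fun x => v x t) (fun x => v_x x t)
      <= mu * (C1_norm D (fun x => rho x 0) (fun x => rho_x x 0)
               + C1_norm D (fun x => v x 0) (fun x => v_x x 0))
         * exp (- (k / 2) * t).
Proof.
  intros tmix hmix vb rb K1 K2 K3 K4 K5 Hrho Hv Hctrl Hrho_pde Hv_pde Hrho_bc Hv_bc _ _ _.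
  assert (Hhmix : 0 < hmix) by (apply h_mix_pos; assumption).
  assert (Hvb : 0 < vb) by (apply vbar_pos; assumption).
  assert (HK3 : 0 < K3).
  { apply cst3_pos; try lra.
    assert (Hgap : / rb - L = hmix * vb) by (apply rhobar_inv_sub; assumption); nra. }
  assert (HK4 : 0 < K4) by (apply Rdiv_lt_0_compat; assumption).
  apply (closed_loop_exp_decay D k vb rb K4 K5 rho rho_x rho_t v v_x v_t); auto.
  - intros x t Hxt; rewrite Hv_pde by exact Hxt.
    apply control_law_closes_loop; [lra | apply Hctrl, Hxt].
  - intros t Ht; rewrite Hv_bc by exact Ht.
    apply control_law_closes_loop; [lra | apply Hctrl; split; [red; lra | exact Ht]].
Qed.
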